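(* Let $a:=\sum_{i=1}^{\infty}10^{1-\frac12 i(i+1)}$ (an irrational number). There exist a countable graph $G$ and a weight function $w:E(G)\to\{a,\,2a,\,2a-1\}$ such that $G$ has no strongly $w$-maximal matching. (Hence the rationality hypothesis cannot be dropped from the statement that every graph with finitely-valued rational edge weights has a strongly $w$-maximal matching.)
   Context: For a set $F$ of edges, $w[F]:=\sum_{e\in F}w(e)$. A matching $M$ in $G$ is called strongly $w$-maximal if $w[N\setminus M]\le w[M\setminus N]$ for every matching $N$ in $G$ with $|M\setminus N|<\infty$ and $|N\setminus M|<\infty$. *)

From Stdlib Require Import Reals List.
Import ListNotations.
Open Scope R_scope.

(* n-th term (n starting at 0, i = n+1) of  a = sum_{i>=1} 10^(1 - i(i+1)/2). *)
Definition a_term (n : nat) : R :=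
  Rpower 10 (1 - INR (S n) * INR (S (S n)) / 2).

(* Graphs: countable simple graphs with vertex set nat, given by a symmetric
   irreflexive adjacency relation.  An edge {u,v} is represented by the pair
   (u,v) with u < v. *)
Definition simple_graph (adj : nat -> nat -> Prop) : Prop :=
  (forall u v, adj u v -> adj v u) /\ (forall u, ~ adj u u).

Definition is_edge (adj : nat -> nat -> Prop) (e : nat * nat) : Prop :=
  (fst e < snd e)%nat /\ adj (fst e) (snd e).

Definition edge_set := nat * nat -> Prop.

Definition is_matching (adj : nat -> nat -> Prop) (M : edge_set) : Prop :=
  (forall e, M e -> is_edge adj e) /\
  (forall e f, M e -> M f -> e <> f ->
     fst e <> fst f /\ fst e <> snd f /\ snd e <> fst f /\ snd e <> snd f).

Definition set_diff (A B : edge_set) : edge_set := fun e => A e /\ ~ B e.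

Definition finite_set (F : edge_set) : Prop :=
  exists l : list (nat * nat), forall e, F e <-> In e l.

Definition wsum (w : nat -> nat -> R) (F : edge_set) (s : R) : Prop :=
  exists l : list (nat * nat),
    NoDup l /\ (forall e, F e <-> In e l) /\
    s = fold_right (fun e acc => w (fst e) (snd e) + acc) 0 l.

Definition strongly_w_maximal (adj : nat -> nat -> Prop)
    (w : nat -> nat -> R) (M : edge_set) : Prop :=
  is_matching adj M /\
  forall N : edge_set, is_matching adj N ->
    finite_set (set_diff M N) -> finite_set (set_diff N M) ->
    forall sNM sMN, wsum w (set_diff N M) sNM -> wsum w (set_diff M N) sMN ->
      sNM <= sMN.

(* Attach to a common centre disjoint weighted paths, the rays, each by an
   edge of weight [2a].  The gain of a ray is what its best matching loses when
   its first vertex is taken by the centre.  A matching using the centre edge of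
   ray [n] is improved by switching to a ray [m] of smaller gain and rematching
   both rays, and one not using the centre is improved by adding a centre edge.
   With weights in [{a, 2a, 2a-1}] the gain of a ray can be made any fractional
   part of a multiple of [a - 1]; choosing the fractional parts of
   [10 ^ (k(k+3)/2) a], which are positive (this is where irrationality enters)
   and tend to [0], leaves no ray of minimal gain. *)

From Stdlib Require Import Reals Lra Lia List Classical ClassicalEpsilon Cantor.
Import ListNotations.
Open Scope R_scope.

Definition indicator (P : Prop) : R := if excluded_middle_informative P then 1 else 0.

Lemma indicator_true (P : Prop) : P -> indicator P = 1.
Proof. unfold indicator. destruct (excluded_middle_informative P); tauto. Qed.

Lemma indicator_false (P : Prop) : ~ P -> indicator P = 0.
Proof. unfold indicator. destruct (excluded_middle_informative P); tauto. Qed.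

Lemma indicator_iff (P Q : Prop) : (P <-> Q) -> indicator P = indicator Q.
Proof.
  intro H. destruct (classic P).
  - rewrite !indicator_true; tauto.
  - rewrite !indicator_false; tauto.
Qed.

Definition truth (P : Prop) : bool := if excluded_middle_informative P then true else false.

Lemma truth_spec (P : Prop) : truth P = true <-> P.
Proof. unfold truth. destruct excluded_middle_informative; intuition discriminate. Qed.

(* For a path whose successive edges have weights [l], [path_opt l] is the
   largest weight of a matching and [gain l] is by how much it exceeds the
   largest weight of a matching avoiding the first edge.  A set of edges of
   the path is a predicate on their indices. *)
Fixpoint gain (l : list R) : R :=
  match l with [] => 0 | x :: l' => Rmax 0 (x - gain l') end.

Fixpoint path_opt (l : list R) : R :=
  match l with [] => 0 | x :: l' => gain (x :: l') + path_opt l' end.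

Lemma gain_nonneg l : 0 <= gain l.
Proof. destruct l; simpl; [lra | apply Rmax_l]. Qed.

Definition path_matching (c : nat -> Prop) : Prop := forall i, c i -> ~ c (S i).

Fixpoint path_weight (c : nat -> Prop) (l : list R) : R :=
  match l with [] => 0 | x :: l' => indicator (c O) * x + path_weight (fun i => c (S i)) l' end.

Lemma path_weight_ext c c' l : (forall i, c i <-> c' i) -> path_weight c l = path_weight c' l.
Proof.
  revert c c'. induction l as [|x l IH]; intros c c' H; simpl; [reflexivity|].
  rewrite (indicator_iff _ _ (H O)), (IH (fun i => c (S i)) (fun i => c' (S i))); auto.
Qed.

Lemma path_weight_le_opt l c : path_matching c ->
  path_weight c l <= path_opt l /\ (~ c O -> path_weight c l <= path_opt l - gain l).
Proof.
  revert c. induction l as [|x l IH]; intros c Hc; simpl; [lra|].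
  destruct (IH (fun i => c (S i))) as [Hopt Havoid]; [intros i; apply Hc|].
  pose proof (gain_nonneg l). pose proof (Rmax_l 0 (x - gain l)).
  destruct (classic (c O)) as [Hc0|Hc0].
  - rewrite indicator_true by exact Hc0.
    specialize (Havoid (Hc O Hc0)). pose proof (Rmax_r 0 (x - gain l)).
    split; [lra | tauto].
  - rewrite indicator_false by exact Hc0. split; intros; lra.
Qed.

Definition shift (b : Prop) (c : nat -> Prop) (i : nat) : Prop :=
  match i with O => b | S j => c j end.

Lemma path_weight_shift b c x l :
  path_weight (shift b c) (x :: l) = indicator b * x + path_weight c l.
Proof. reflexivity. Qed.

Lemma path_opt_attained l :
  (exists c, path_matching c /\ (forall i, c i -> (i < length l)%nat) /\
             path_weight c l = path_opt l) /\
  (exists c, path_matching c /\ (forall i, c i -> (0 < i < length l)%nat) /\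
             path_weight c l = path_opt l - gain l).
Proof.
  induction l as [|x l IH].
  - split; exists (fun _ => False); unfold path_matching; simpl;
      repeat split; (tauto || lra).
  - destruct IH as [[c1 [M1 [B1 W1]]] [c2 [M2 [B2 W2]]]].
    assert (Hshift : path_matching (shift False c1) /\
                     (forall i, shift False c1 i -> (0 < i < length (x :: l))%nat) /\
                     path_weight (shift False c1) (x :: l) = path_opt l).
    { refine (conj _ (conj _ _)).
      - intros [|i]; simpl; [tauto | exact (M1 i)].
      - intros [|i] h; simpl in h |- *; [tauto|]. specialize (B1 i h). lia.
      - rewrite path_weight_shift, indicator_false by tauto. lra. }
    split.
    + destruct (Rle_dec (gain l) x) as [Hx|Hx].
      * exists (shift True c2). refine (conj _ (conj _ _)).
        -- intros [|i]; simpl; [intros _ h; specialize (B2 O h); lia | exact (M2 i)].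
        -- intros [|i] h; simpl in h |- *; [lia|]. specialize (B2 i h). lia.
        -- rewrite path_weight_shift, indicator_true, W2 by tauto.
           simpl. rewrite Rmax_right by lra. lra.
      * exists (shift False c1). destruct Hshift as [HM [HB HW]]. refine (conj HM (conj _ _)).
        -- intros i h. specialize (HB i h). lia.
        -- rewrite HW. simpl. rewrite Rmax_left by lra. lra.
    + exists (shift False c1). destruct Hshift as [HM [HB HW]]. refine (conj HM (conj HB _)).
      rewrite HW. simpl. lra.
Qed.

Section Gadget.

Variable a : R.
Hypothesis a_range : 1 <= a < 2.

(* Prepending [2a-1; a] adds [a - 1] to a gain in [0, 1); prepending
   [2a-1; 2a] on top of that subtracts [1] again.  Hence [gain (gadget K)] is
   the fractional part of [K (a - 1)]. *)
Definition gadget_step (l : list R) : list R :=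
  if Rle_dec 1 (gain l + (a - 1)) then [2*a-1; 2*a; 2*a-1; a] ++ l else [2*a-1; a] ++ l.

Definition gadget (K : nat) : list R := Nat.iter K gadget_step [].

Lemma gain_gadget_frac K :
  0 <= gain (gadget K) < 1 /\ exists b : nat, gain (gadget K) = INR K * (a - 1) - INR b.
Proof.
  induction K as [|K [Hc [b Hb]]].
  - simpl. split; [lra|]. exists 0%nat. simpl. lra.
  - change (gadget (S K)) with (gadget_step (gadget K)). unfold gadget_step.
    set (c := gain (gadget K)) in *. rewrite S_INR.
    destruct (Rle_dec 1 (c + (a - 1))).
    + split; [|exists (S b); rewrite S_INR]; simpl; fold c;
        unfold Rmax; repeat destruct Rle_dec; lra.
    + split; [|exists b]; simpl; fold c; unfold Rmax; repeat destruct Rle_dec; lra.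
Qed.

Lemma gain_gadget K (x : R) (z : Z) :
  0 <= x < 1 -> x = INR K * (a - 1) - IZR z -> gain (gadget K) = x.
Proof.
  intros Hx Hz. destruct (gain_gadget_frac K) as [Hc [b Hb]].
  assert (Hint : gain (gadget K) - x = IZR (z - Z.of_nat b)).
  { rewrite minus_IZR, <- INR_IZR_INZ. lra. }
  assert (-1 < IZR (z - Z.of_nat b) < 1) as [Hlo Hhi] by lra.
  apply lt_IZR in Hlo, Hhi.
  replace (z - Z.of_nat b)%Z with 0%Z in Hint by lia. simpl in Hint. lra.
Qed.

Lemma gadget_weights K : Forall (fun x => x = a \/ x = 2 * a \/ x = 2 * a - 1) (gadget K).
Proof.
  induction K as [|K IH]; [constructor|].
  change (gadget (S K)) with (gadget_step (gadget K)). unfold gadget_step.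
  destruct Rle_dec; repeat constructor; auto; lra.
Qed.

End Gadget.


Definition disjoint_edges (e f : nat * nat) : Prop :=
  fst e <> fst f /\ fst e <> snd f /\ snd e <> fst f /\ snd e <> snd f.

Lemma disjoint_edges_sym e f : disjoint_edges e f -> disjoint_edges f e.
Proof. unfold disjoint_edges. intuition. Qed.

Section Improvement.

Variable adj : nat -> nat -> Prop.
Variable w : nat -> nat -> R.

Lemma is_matching_sub (A B : edge_set) :
  (forall e, A e -> B e) -> is_matching adj B -> is_matching adj A.
Proof. intros HAB [HB1 HB2]. split; auto. Qed.

Lemma is_matching_union (A B : edge_set) :
  is_matching adj A -> is_matching adj B ->
  (forall e f, A e -> B f -> disjoint_edges e f) ->
  is_matching adj (fun e => A e \/ B e).
Proof.
  intros [HA1 HA2] [HB1 HB2] HAB. split.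
  - intros e [h|h]; auto.
  - intros e f [he|he] [hf|hf] nef.
    + exact (HA2 e f he hf nef).
    + exact (HAB e f he hf).
    + exact (disjoint_edges_sym _ _ (HAB f e hf he)).
    + exact (HB2 e f he hf nef).
Qed.

Definition weight_on (U : list (nat * nat)) (P : edge_set) : R :=
  fold_right (fun e acc => indicator (P e) * w (fst e) (snd e) + acc) 0 U.

Definition list_weight (l : list (nat * nat)) : R :=
  fold_right (fun e acc => w (fst e) (snd e) + acc) 0 l.

Lemma list_weight_filter U P :
  list_weight (filter (fun e => truth (P e)) U) = weight_on U P.
Proof.
  unfold list_weight, weight_on. induction U as [|e U IH]; simpl; [reflexivity|].
  replace (indicator (P e)) with (if truth (P e) then 1 else 0)
    by (unfold truth, indicator; now destruct excluded_middle_informative).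
  destruct (truth (P e)); simpl; rewrite IH; lra.
Qed.

Lemma weight_on_cons e U P :
  weight_on (e :: U) P = indicator (P e) * w (fst e) (snd e) + weight_on U P.
Proof. reflexivity. Qed.

Lemma weight_on_app U1 U2 P : weight_on (U1 ++ U2) P = weight_on U1 P + weight_on U2 P.
Proof. induction U1 as [|e U1 IH]; simpl; [lra|]. unfold weight_on in *. rewrite IH. lra. Qed.

Lemma In_filter_truth (P : edge_set) U e :
  In e (filter (fun e => truth (P e)) U) <-> In e U /\ P e.
Proof. rewrite filter_In, truth_spec. reflexivity. Qed.

Lemma wsum_weight_on_exists F U :
  NoDup U -> (forall e, F e -> In e U) -> finite_set F /\ wsum w F (weight_on U F).
Proof.
  intros HU HF. set (l := filter (fun e => truth (F e)) U).
  assert (Hl : forall e, F e <-> In e l).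
  { intro e. unfold l. rewrite In_filter_truth. intuition. }
  split; [exists l; exact Hl|].
  exists l. split; [apply NoDup_filter, HU|]. split; [exact Hl|].
  symmetry. apply list_weight_filter.
Qed.

Lemma indicator_set_diff (A B : Prop) :
  indicator (A /\ ~ B) - indicator (B /\ ~ A) = indicator A - indicator B.
Proof. unfold indicator. repeat destruct excluded_middle_informative; tauto || lra. Qed.

Lemma weight_on_set_diff N M T U : (forall e, In e U -> (N e <-> T e)) ->
  weight_on U (set_diff N M) - weight_on U (set_diff M N) = weight_on U T - weight_on U M.
Proof.
  induction U as [|e U IH]; intro H; [simpl; lra|].
  specialize (IH (fun f hf => H f (or_intror hf))).
  unfold weight_on, set_diff in *. simpl.
  rewrite <- (indicator_iff _ _ (H e (or_introl eq_refl))).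
  pose proof (indicator_set_diff (N e) (M e)). nra.
Qed.

(* Replacing [M] by [T] on the edges [U], and keeping [M] elsewhere, is a
   matching as soon as every edge of [M] meeting an edge of [U] lies in [U]. *)
Lemma not_strongly_maximal_of_local_improvement (M T : edge_set) U :
  is_matching adj M -> is_matching adj T -> NoDup U ->
  (forall e, T e -> In e U) ->
  (forall e f, M e -> In f U -> In e U \/ disjoint_edges e f) ->
  weight_on U M < weight_on U T -> ~ strongly_w_maximal adj w M.
Proof.
  intros HM HT HU HTU HMU Hlt [_ Hmax].
  set (N := fun e => (M e /\ ~ In e U) \/ T e).
  assert (HN : is_matching adj N).
  { apply is_matching_union; [|exact HT|].
    - apply (is_matching_sub _ M); [tauto | exact HM].
    - intros e f [he hnU] hf. destruct (HMU e f he (HTU f hf)); tauto. }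
  assert (HNM : forall e, set_diff N M e -> In e U).
  { intros e [[h|h] nm]; [tauto | auto]. }
  assert (HMN : forall e, set_diff M N e -> In e U).
  { intros e [h nn]. apply NNPP. intro nU. apply nn. left. tauto. }
  destruct (wsum_weight_on_exists _ _ HU HNM) as [FNM WNM].
  destruct (wsum_weight_on_exists _ _ HU HMN) as [FMN WMN].
  specialize (Hmax N HN FMN FNM _ _ WNM WMN).
  assert (HNT : forall e, In e U -> (N e <-> T e)) by (intros e he; unfold N; intuition).
  pose proof (weight_on_set_diff N M T U HNT). lra.
Qed.

End Improvement.

(* Vertex [0] is the centre of the star, [vtx k j] the [j]-th vertex of its
   [k]-th ray, and [hub k] the edge joining the centre to the ray. *)
Definition vtx (k j : nat) : nat := S (Cantor.to_nat (k, j)).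
Definition hub (k : nat) : nat * nat := (0%nat, vtx k 0).
Definition ray_edge (k i : nat) : nat * nat := (vtx k i, vtx k (S i)).

Lemma vtx_inj k j k' j' : vtx k j = vtx k' j' -> k = k' /\ j = j'.
Proof.
  unfold vtx. intro E.
  assert (E' : Cantor.to_nat (k, j) = Cantor.to_nat (k', j')) by lia.
  apply Cantor.to_nat_inj in E'. injection E'. auto.
Qed.

Lemma vtx_neq_0 k j : vtx k j <> 0%nat.
Proof. discriminate. Qed.

Lemma vtx_lt_succ k j : (vtx k j < vtx k (S j))%nat.
Proof.
  unfold vtx. pose proof (Cantor.to_nat_spec k j). pose proof (Cantor.to_nat_spec k (S j)). nia.
Qed.

Ltac vtx_neq := let E := fresh in intro E;
  first [ exact (vtx_neq_0 _ _ E) | exact (vtx_neq_0 _ _ (eq_sym E))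
        | apply vtx_inj in E; destruct E; lia ].

Lemma hub_inj k k' : hub k = hub k' -> k = k'.
Proof. intro E. apply (f_equal snd) in E. apply vtx_inj in E. tauto. Qed.

Lemma ray_edge_inj k i k' j : ray_edge k i = ray_edge k' j -> k = k' /\ i = j.
Proof. intro E. apply (f_equal fst) in E. apply vtx_inj, E. Qed.

Lemma hub_neq_ray_edge k k' i : hub k <> ray_edge k' i.
Proof. intro E. apply (f_equal fst) in E. exact (vtx_neq_0 _ _ (eq_sym E)). Qed.

Lemma disjoint_ray_edges k i k' j :
  k <> k' \/ (i <> j /\ i <> S j /\ j <> S i) -> disjoint_edges (ray_edge k i) (ray_edge k' j).
Proof. intro. unfold disjoint_edges, ray_edge; simpl; repeat split; vtx_neq. Qed.

Lemma disjoint_hub_ray_edge k k' i :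
  k <> k' \/ (0 < i)%nat -> disjoint_edges (hub k) (ray_edge k' i).
Proof. intro. unfold disjoint_edges, ray_edge, hub; simpl; repeat split; vtx_neq. Qed.

Section Star.

Variable rays : nat -> list R.
Variable hub_weight : R.

Definition star_edge (e : nat * nat) : Prop :=
  (exists k, e = hub k) \/ (exists k i, (i < length (rays k))%nat /\ e = ray_edge k i).

Definition star_adj (x y : nat) : Prop := star_edge (x, y) \/ star_edge (y, x).

(* The weight of an edge is read off its endpoint farther from the centre. *)
Definition star_weight (u v : nat) : R :=
  match v with
  | O => 0
  | S y => let (k, j) := Cantor.of_nat y in
           match j with O => hub_weight | S i => nth i (rays k) 0 end
  end.

Lemma star_weight_hub k : star_weight (fst (hub k)) (snd (hub k)) = hub_weight.
Proof.
  unfold star_weight, hub, ray_edge, vtx; cbn [fst snd].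
  rewrite Cantor.cancel_of_to. reflexivity.
Qed.

Lemma star_weight_ray_edge k i :
  star_weight (fst (ray_edge k i)) (snd (ray_edge k i)) = nth i (rays k) 0.
Proof.
  unfold star_weight, hub, ray_edge, vtx; cbn [fst snd].
  rewrite Cantor.cancel_of_to. reflexivity.
Qed.

Lemma star_edge_lt e : star_edge e -> (fst e < snd e)%nat.
Proof.
  intros [[k ->]|[k [i [_ ->]]]]; simpl.
  - pose proof (vtx_neq_0 k 0). lia.
  - apply vtx_lt_succ.
Qed.

Lemma is_edge_star e : is_edge star_adj e <-> star_edge e.
Proof.
  destruct e as [x y]. unfold is_edge, star_adj; simpl. split.
  - intros [Hlt [H|H]]; [exact H|]. apply star_edge_lt in H. simpl in H. lia.
  - intro H. split; [exact (star_edge_lt _ H) | left; exact H].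
Qed.

Lemma star_simple : simple_graph star_adj.
Proof.
  split.
  - intros u v [H|H]; [right|left]; exact H.
  - intros u [H|H]; apply star_edge_lt in H; simpl in H; lia.
Qed.

Lemma star_weight_in (S : R -> Prop) :
  S hub_weight -> (forall k, Forall S (rays k)) ->
  forall e, is_edge star_adj e -> S (star_weight (fst e) (snd e)).
Proof.
  intros Hh Hr e He. apply is_edge_star in He.
  destruct He as [[k ->]|[k [i [Hi ->]]]].
  - rewrite star_weight_hub. exact Hh.
  - rewrite star_weight_ray_edge. apply (proj1 (Forall_forall _ _) (Hr k)), nth_In, Hi.
Qed.

Lemma matching_hub_unique M k k' :
  is_matching star_adj M -> M (hub k) -> M (hub k') -> k = k'.
Proof.
  intros [_ HM] Hk Hk'. apply NNPP. intro Hne.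
  assert (hub k <> hub k') as Hne' by (intro E; apply Hne, hub_inj, E).
  destruct (HM _ _ Hk Hk' Hne') as [E _]. apply E. reflexivity.
Qed.

Lemma matching_path_matching M k :
  is_matching star_adj M -> path_matching (fun i => M (ray_edge k i)).
Proof.
  intros [_ HM] i Hi HSi.
  assert (ray_edge k i <> ray_edge k (S i)) as Hne by (intro E; apply ray_edge_inj in E; lia).
  destruct (HM _ _ Hi HSi Hne) as [_ [_ [E _]]]. apply E. reflexivity.
Qed.

Lemma matching_hub_excludes M k :
  is_matching star_adj M -> M (hub k) -> ~ M (ray_edge k 0).
Proof.
  intros [_ HM] Hh H0. destruct (HM _ _ Hh H0 (hub_neq_ray_edge k k 0)) as [_ [_ [E _]]].
  apply E. reflexivity.
Qed.

Lemma matching_ray_weight_le M k : is_matching star_adj M ->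
  path_weight (fun i => M (ray_edge k i)) (rays k)
  <= path_opt (rays k) - indicator (M (hub k)) * gain (rays k).
Proof.
  intro HM.
  destruct (path_weight_le_opt (rays k) _ (matching_path_matching M k HM)) as [Hopt Havoid].
  destruct (classic (M (hub k))) as [Hh|Hh].
  - rewrite indicator_true by exact Hh. specialize (Havoid (matching_hub_excludes M k HM Hh)). lra.
  - rewrite indicator_false by exact Hh. lra.
Qed.

Definition ray_edges (k : nat) (c : nat -> Prop) : edge_set :=
  fun e => exists i, c i /\ e = ray_edge k i.

Lemma ray_edges_ray_edge k c k' i : ray_edges k c (ray_edge k' i) <-> k = k' /\ c i.
Proof.
  split.
  - intros [j [Hj E]]. apply ray_edge_inj in E. destruct E as [-> ->]. auto.
  - intros [-> Hi]. exists i. auto.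
Qed.

Lemma ray_edges_hub k c k' : ~ ray_edges k c (hub k').
Proof. intros [i [_ E]]. exact (hub_neq_ray_edge _ _ _ E). Qed.

Lemma is_matching_hub k : is_matching star_adj (fun e => e = hub k).
Proof.
  split.
  - intros e ->. apply is_edge_star. left. exists k. reflexivity.
  - intros e f -> -> Hne. contradiction.
Qed.

Lemma is_matching_ray_edges k c : path_matching c ->
  (forall i, c i -> (i < length (rays k))%nat) -> is_matching star_adj (ray_edges k c).
Proof.
  intros Hc Hlen. split.
  - intros e [i [Hi ->]]. apply is_edge_star. right. exists k, i. auto.
  - intros e f [i [Hi ->]] [j [Hj ->]] Hne. apply disjoint_ray_edges. right.
    assert (i <> j) by (intros ->; auto).
    assert (i <> S j) by (intros ->; exact (Hc j Hj Hi)).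
    assert (j <> S i) by (intros ->; exact (Hc i Hi Hj)).
    auto.
Qed.

Definition ray_list (k : nat) : list (nat * nat) := map (ray_edge k) (seq 0 (length (rays k))).

Lemma In_ray_list k e :
  In e (ray_list k) <-> exists i, (i < length (rays k))%nat /\ e = ray_edge k i.
Proof.
  unfold ray_list. rewrite in_map_iff. split.
  - intros [i [<- Hi]]. apply in_seq in Hi. exists i. split; [lia | reflexivity].
  - intros [i [Hi ->]]. exists i. split; [reflexivity | apply in_seq; lia].
Qed.

Lemma NoDup_ray_list k : NoDup (ray_list k).
Proof.
  apply NoDup_map_NoDup_ForallPairs; [|apply seq_NoDup].
  intros i j _ _ E. apply ray_edge_inj in E. tauto.
Qed.

Lemma weight_on_ray_suffix k P l s : (forall i, nth i l 0 = nth (s + i) (rays k) 0) ->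
  weight_on star_weight (map (ray_edge k) (seq s (length l))) P
  = path_weight (fun i => P (ray_edge k (s + i))) l.
Proof.
  revert s. induction l as [|x l IH]; intros s Hl; [reflexivity|].
  simpl length. rewrite <- cons_seq, map_cons, weight_on_cons, star_weight_ray_edge. simpl.
  rewrite IH.
  - rewrite Nat.add_0_r. specialize (Hl O). rewrite Nat.add_0_r in Hl. simpl in Hl. rewrite <- Hl.
    f_equal. apply path_weight_ext. intro i. rewrite Nat.add_succ_r. reflexivity.
  - intro i. change (nth i l 0) with (nth (S i) (x :: l) 0). rewrite Hl. f_equal. lia.
Qed.

Lemma weight_on_ray_list k P :
  weight_on star_weight (ray_list k) P = path_weight (fun i => P (ray_edge k i)) (rays k).
Proof. apply (weight_on_ray_suffix k P (rays k) 0). reflexivity. Qed.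

Definition swap_zone (n m : nat) : list (nat * nat) :=
  hub n :: hub m :: ray_list n ++ ray_list m.

Lemma In_swap_zone_ray_edge n m k i :
  (i < length (rays k))%nat -> k = n \/ k = m -> In (ray_edge k i) (swap_zone n m).
Proof.
  intros Hi Hk. unfold swap_zone. simpl. right; right. apply in_or_app.
  destruct Hk as [->| ->]; [left | right]; apply In_ray_list; eauto.
Qed.

Lemma NoDup_swap_zone n m : n <> m -> NoDup (swap_zone n m).
Proof.
  intro Hnm.
  assert (Hhubs : forall k e, In e (ray_list n ++ ray_list m) -> e <> hub k).
  { intros k e He ->. apply in_app_or in He.
    destruct He as [He|He]; apply In_ray_list in He; destruct He as [i [_ E]];
      exact (hub_neq_ray_edge _ _ _ E). }
  constructor; [|constructor].
  - intros [E|E]; [exact (Hnm (hub_inj _ _ (eq_sym E))) | exact (Hhubs n _ E eq_refl)].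
  - intro E. exact (Hhubs m _ E eq_refl).
  - apply NoDup_app; try apply NoDup_ray_list.
    intros e He He'. apply In_ray_list in He, He'.
    destruct He as [i [_ ->]], He' as [j [_ E]]. apply ray_edge_inj in E. tauto.
Qed.

Lemma weight_on_swap_zone n m P :
  weight_on star_weight (swap_zone n m) P
  = indicator (P (hub n)) * hub_weight + indicator (P (hub m)) * hub_weight
    + path_weight (fun i => P (ray_edge n i)) (rays n)
    + path_weight (fun i => P (ray_edge m i)) (rays m).
Proof.
  unfold swap_zone.
  rewrite !weight_on_cons, weight_on_app, !weight_on_ray_list, !star_weight_hub. ring.
Qed.

Lemma matching_meets_swap_zone M n m e f :
  is_matching star_adj M -> (forall k, M (hub k) -> k = n) -> M e -> In f (swap_zone n m) ->
  In e (swap_zone n m) \/ disjoint_edges e f.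
Proof.
  intros HM Hhub He Hf.
  assert (Hs : star_edge e) by (apply is_edge_star, (proj1 HM), He).
  destruct Hs as [[k ->]|[k [i [Hi ->]]]].
  - left. rewrite (Hhub k He). unfold swap_zone. simpl. auto.
  - destruct (Nat.eq_dec k n) as [->|Hkn]; [left; apply In_swap_zone_ray_edge; auto|].
    destruct (Nat.eq_dec k m) as [->|Hkm]; [left; apply In_swap_zone_ray_edge; auto|].
    right. unfold swap_zone in Hf. simpl in Hf. destruct Hf as [<-|[<-|Hf]].
    + apply disjoint_edges_sym, disjoint_hub_ray_edge. auto.
    + apply disjoint_edges_sym, disjoint_hub_ray_edge. auto.
    + apply in_app_or in Hf.
      destruct Hf as [Hf|Hf]; apply In_ray_list in Hf; destruct Hf as [j [_ ->]];
        apply disjoint_ray_edges; auto.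
Qed.

(* The centre moves onto ray [m]; ray [n] is matched optimally by [cn] and ray
   [m] optimally away from its first vertex by [cm]. *)
Definition swap_matching (n m : nat) (cn cm : nat -> Prop) : edge_set :=
  fun e => (e = hub m \/ ray_edges n cn e) \/ ray_edges m cm e.

Section Swap.

Variables (n m : nat) (cn cm : nat -> Prop).
Hypothesis n_neq_m : n <> m.
Hypotheses (cn_matching : path_matching cn) (cm_matching : path_matching cm).
Hypothesis cn_bounded : forall i, cn i -> (i < length (rays n))%nat.
Hypothesis cm_bounded : forall i, cm i -> (0 < i < length (rays m))%nat.

Lemma is_matching_swap : is_matching star_adj (swap_matching n m cn cm).
Proof.
  apply is_matching_union; [apply is_matching_union | |].
  - apply is_matching_hub.
  - exact (is_matching_ray_edges n cn cn_matching cn_bounded).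
  - intros e f -> [i [_ ->]]. apply disjoint_hub_ray_edge. auto.
  - apply is_matching_ray_edges; [exact cm_matching | intros i hi; apply cm_bounded, hi].
  - intros e f [-> | [i [_ ->]]] [j [hj ->]].
    + apply disjoint_hub_ray_edge. right. apply cm_bounded, hj.
    + apply disjoint_ray_edges. auto.
Qed.

Lemma swap_matching_in_zone e : swap_matching n m cn cm e -> In e (swap_zone n m).
Proof.
  intros [[-> | [i [hi ->]]] | [i [hi ->]]].
  - unfold swap_zone. simpl. auto.
  - apply In_swap_zone_ray_edge; auto.
  - apply In_swap_zone_ray_edge; [apply cm_bounded, hi | auto].
Qed.

Lemma weight_on_swap_matching :
  weight_on star_weight (swap_zone n m) (swap_matching n m cn cm)
  = hub_weight + path_weight cn (rays n) + path_weight cm (rays m).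
Proof.
  rewrite weight_on_swap_zone.
  rewrite (indicator_false (swap_matching n m cn cm (hub n))).
  2:{ intros [[E|E]|E]; [exact (n_neq_m (hub_inj _ _ E)) | eapply ray_edges_hub, E ..]. }
  rewrite (indicator_true (swap_matching n m cn cm (hub m))) by (left; left; reflexivity).
  assert (Hhub : forall k i, ray_edge k i <> hub m)
    by (intros k i E; exact (hub_neq_ray_edge _ _ _ (eq_sym E))).
  rewrite (path_weight_ext (fun i => swap_matching n m cn cm (ray_edge n i)) cn).
  2:{ intro i. unfold swap_matching. rewrite !ray_edges_ray_edge.
      split; [|auto].
      intros [[E|[_ H]]|[E _]]; [exfalso; exact (Hhub _ _ E) | exact H | congruence]. }
  rewrite (path_weight_ext (fun i => swap_matching n m cn cm (ray_edge m i)) cm).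
  2:{ intro i. unfold swap_matching. rewrite !ray_edges_ray_edge.
      split; [|auto].
      intros [[E|[E _]]|[_ H]]; [exfalso; exact (Hhub _ _ E) | congruence | exact H]. }
  ring.
Qed.

End Swap.

Lemma star_swap_not_maximal M n m :
  n <> m -> is_matching star_adj M -> (forall k, M (hub k) -> k = n) ->
  indicator (M (hub n)) * (hub_weight - gain (rays n)) < hub_weight - gain (rays m) ->
  ~ strongly_w_maximal star_adj star_weight M.
Proof.
  intros Hnm HM Hhub Hgain.
  destruct (proj1 (path_opt_attained (rays n))) as [cn [Mn [Bn Wn]]].
  destruct (proj2 (path_opt_attained (rays m))) as [cm [Mm [Bm Wm]]].
  apply (not_strongly_maximal_of_local_improvement _ _ M (swap_matching n m cn cm) (swap_zone n m)).
  - exact HM.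
  - apply is_matching_swap; assumption.
  - apply NoDup_swap_zone, Hnm.
  - apply swap_matching_in_zone; assumption.
  - intros e f. apply matching_meets_swap_zone; assumption.
  - assert (Hm0 : indicator (M (hub m)) = 0).
    { apply indicator_false. intro H. exact (Hnm (eq_sym (Hhub m H))). }
    pose proof (matching_ray_weight_le M n HM). pose proof (matching_ray_weight_le M m HM).
    rewrite weight_on_swap_matching, weight_on_swap_zone by exact Hnm.
    rewrite Hm0 in *. lra.
Qed.

End Star.

Fixpoint a_exp (k : nat) : nat :=
  match k with O => O | S k' => (a_exp k' + S (S k'))%nat end.

Lemma a_exp_double k : (2 * (a_exp k + 1) = (k + 1) * (k + 2))%nat.
Proof. induction k; simpl a_exp; nia. Qed.

Lemma pow10_pos n : 0 < 10 ^ n.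
Proof. apply pow_lt; lra. Qed.

Lemma a_term_pow k : a_term k = / 10 ^ a_exp k.
Proof.
  unfold a_term.
  replace (1 - INR (S k) * INR (S (S k)) / 2) with (- INR (a_exp k)).
  - rewrite Rpower_Ropp, Rpower_pow by lra. reflexivity.
  - pose proof (f_equal INR (a_exp_double k)) as E.
    rewrite !mult_INR, !plus_INR in E. simpl in E. rewrite !S_INR. lra.
Qed.

Lemma a_term_pos k : 0 < a_term k.
Proof. rewrite a_term_pow. apply Rinv_0_lt_compat, pow10_pos. Qed.

Lemma scaled_partial_sum_nat n : exists q : nat, 10 ^ a_exp n * sum_f_R0 a_term n = INR q.
Proof.
  induction n as [|n [q Hq]].
  - exists 1%nat. simpl. rewrite a_term_pow. simpl. lra.
  - exists (q * 10 ^ S (S n) + 1)%nat.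
    rewrite tech5, a_term_pow, plus_INR, mult_INR, pow_INR, <- Hq.
    change (a_exp (S n)) with (a_exp n + S (S n))%nat.
    replace (INR 10) with 10 by (simpl; lra).
    rewrite pow_add. simpl INR.
    field. split; apply pow_nonzero; lra.
Qed.

Lemma Un_cv_const (c : R) : Un_cv (fun _ => c) c.
Proof.
  intros eps Heps. exists 0%nat. intros n _.
  unfold Rdist. rewrite Rminus_diag, Rabs_R0. lra.
Qed.

Lemma partial_sum_growing : Un_growing (sum_f_R0 a_term).
Proof. intro n. simpl. pose proof (a_term_pos (S n)). lra. Qed.

(* The tail beyond [k] is dominated by a geometric series of ratio [1/10]. *)
Definition tail_bound (k : nat) : R := 10 / 9 * / 10 ^ a_exp (S k).

Lemma tail_bound_pos k : 0 < tail_bound k.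
Proof. unfold tail_bound. pose proof (Rinv_0_lt_compat _ (pow10_pos (a_exp (S k)))). lra. Qed.

Lemma tail_bound_step k :
  sum_f_R0 a_term (S k) + tail_bound (S k) <= sum_f_R0 a_term k + tail_bound k.
Proof.
  unfold tail_bound. simpl sum_f_R0. rewrite a_term_pow.
  change (a_exp (S (S k))) with (a_exp (S k) + S (S (S k)))%nat.
  rewrite pow_add, Rinv_mult.
  assert (0 < / 10 ^ a_exp (S k)) by apply Rinv_0_lt_compat, pow10_pos.
  assert (/ 10 ^ S (S (S k)) <= / 10).
  { apply Rinv_le_contravar; [lra|].
    simpl. pose proof (pow_R1_Rle 10 k ltac:(lra)). nra. }
  nra.
Qed.

Lemma partial_sum_le_tail n m : sum_f_R0 a_term m <= sum_f_R0 a_term n + tail_bound n.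
Proof.
  destruct (Nat.le_gt_cases n m) as [Hnm|Hmn].
  - replace m with (n + (m - n))%nat by lia. generalize (m - n)%nat as d.
    assert (forall d, sum_f_R0 a_term (n + d) + tail_bound (n + d)
                      <= sum_f_R0 a_term n + tail_bound n) as Hd.
    { induction d; [rewrite Nat.add_0_r; lra|].
      rewrite Nat.add_succ_r. pose proof (tail_bound_step (n + d)). lra. }
    intro d. pose proof (Hd d). pose proof (tail_bound_pos (n + d)). lra.
  - pose proof (growing_prop _ n m partial_sum_growing ltac:(lia)).
    pose proof (tail_bound_pos n). lra.
Qed.

Section SumA.

Variable a : R.
Hypothesis ha : infinite_sum a_term a.

Lemma partial_sum_lt n : sum_f_R0 a_term n < a.
Proof.
  pose proof (growing_ineq _ _ partial_sum_growing ha (S n)).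
  simpl in H. pose proof (a_term_pos (S n)). lra.
Qed.

Lemma le_partial_sum_tail n : a <= sum_f_R0 a_term n + tail_bound n.
Proof. exact (Rle_cv_lim (partial_sum_le_tail n) ha (Un_cv_const _)). Qed.

Lemma a_bounds : 1 <= a < 2.
Proof.
  pose proof (Rlt_le _ _ (partial_sum_lt 0)). pose proof (le_partial_sum_tail 0).
  unfold tail_bound in *. simpl in *. rewrite a_term_pow in *. simpl in *. lra.
Qed.

(* The fractional part of [10 ^ a_exp n * a]. *)
Definition residue (n : nat) : R := 10 ^ a_exp n * (a - sum_f_R0 a_term n).

Lemma residue_pos n : 0 < residue n.
Proof.
  apply Rmult_lt_0_compat; [apply pow10_pos|]. pose proof (partial_sum_lt n). lra.
Qed.

Lemma residue_lt n : residue n < / 10 ^ S n.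
Proof.
  pose proof (le_partial_sum_tail n) as Ha. unfold residue, tail_bound in *.
  change (a_exp (S n)) with (a_exp n + S (S n))%nat in Ha.
  rewrite pow_add, Rinv_mult in Ha.
  pose proof (pow10_pos (a_exp n)). pose proof (pow10_pos (S n)).
  apply Rle_lt_trans with (10 / 9 * / 10 ^ S (S n)).
  - apply Rle_trans with (10 ^ a_exp n * (10 / 9 * (/ 10 ^ a_exp n * / 10 ^ S (S n)))).
    + apply Rmult_le_compat_l; [lra|].
      set (t := / 10 ^ a_exp n * / 10 ^ S (S n)) in *. lra.
    + right. field. split; apply pow_nonzero; lra.
  - change (10 ^ S (S n)) with (10 * 10 ^ S n).
    rewrite Rinv_mult. pose proof (Rinv_0_lt_compat _ H0). lra.
Qed.

Lemma residue_lt_1 n : residue n < 1.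
Proof.
  pose proof (residue_lt n). pose proof (pow_R1_Rle 10 (S n) ltac:(lra)).
  assert (/ 10 ^ S n <= 1) by (rewrite <- Rinv_1; apply Rinv_le_contravar; lra). lra.
Qed.

Lemma residue_integral n : exists z : Z, residue n = INR (10 ^ a_exp n) * (a - 1) - IZR z.
Proof.
  destruct (scaled_partial_sum_nat n) as [q Hq].
  exists (Z.of_nat q - Z.of_nat (10 ^ a_exp n))%Z.
  rewrite minus_IZR, <- !INR_IZR_INZ, <- Hq, pow_INR.
  replace (INR 10) with 10 by (simpl; lra). unfold residue. ring.
Qed.

Lemma residue_not_minimal n : exists m, residue m < residue n.
Proof.
  destruct (pow_lt_1_zero (/ 10) ltac:(rewrite Rabs_pos_eq; lra) _ (residue_pos n)) as [m Hm].
  exists m. specialize (Hm (S m) ltac:(lia)).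
  rewrite pow_inv, Rabs_pos_eq in Hm by (left; apply Rinv_0_lt_compat, pow10_pos).
  pose proof (residue_lt m). lra.
Qed.

Definition a_rays (k : nat) : list R := gadget a (10 ^ a_exp k).

Lemma gain_a_rays k : gain (a_rays k) = residue k.
Proof.
  destruct (residue_integral k) as [z Hz].
  apply (gain_gadget a a_bounds _ _ z); [|exact Hz].
  split; [left; apply residue_pos | apply residue_lt_1].
Qed.

End SumA.

Theorem mainTheorem9 (a : R) (ha : infinite_sum a_term a) :
  exists (adj : nat -> nat -> Prop) (w : nat -> nat -> R),
    simple_graph adj /\
    (forall u v, is_edge adj (u, v) ->
       w u v = a \/ w u v = 2 * a \/ w u v = 2 * a - 1) /\
    ~ (exists M : edge_set, strongly_w_maximal adj w M).
Proof.
  pose proof (a_bounds a ha) as Ha.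
  exists (star_adj (a_rays a)), (star_weight (a_rays a) (2 * a)).
  split; [apply star_simple | split].
  - intros u v Huv.
    apply (star_weight_in _ _ (fun x => x = a \/ x = 2 * a \/ x = 2 * a - 1)) with (e := (u, v));
      [right; left; reflexivity | intro k; apply gadget_weights | exact Huv].
  - intros [M HM]. pose proof (proj1 HM) as HMm.
    destruct (classic (exists n, M (hub n))) as [[n Hn]|Hno].
    + destruct (residue_not_minimal a ha n) as [m Hm].
      apply (star_swap_not_maximal (a_rays a) (2 * a) M n m); auto.
      * intros ->. lra.
      * intros k Hk. exact (matching_hub_unique _ M k n HMm Hk Hn).
      * rewrite indicator_true, !(gain_a_rays a ha) by exact Hn. lra.
    + apply (star_swap_not_maximal (a_rays a) (2 * a) M 1 0); auto.
      * intros k Hk. exfalso. eauto.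
      * rewrite indicator_false, Rmult_0_l, (gain_a_rays a ha) by eauto.
        pose proof (residue_lt_1 a ha 0). lra.
Qed.
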